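(* For $1\le i\le k$ let $G_i$ be an $r_i$-regular graph with $n_i\ge 2$ vertices and let $A_i$ be an Abelian group of order $n_i$. Let $r=\sum_{i=1}^k r_i$ and suppose $\exp(A_i)$ divides $r-r_i$ for every $1\le i\le k$. (a) If each $G_i$ is $A_i$-distance antimagic, then $G_1\Box\cdots\Box G_k$ is $A_1\times\cdots\times A_k$-distance antimagic. (b) If each $G_i$ is $A_i$-distance magic, then $G_1\Box\cdots\Box G_k$ is $A_1\times\cdots\times A_k$-distance magic.
   Context: The Cartesian product $G_1\Box\cdots\Box G_k$ has vertex set $V(G_1)\times\cdots\times V(G_k)$, with $(x_1,\ldots,x_k)$ and $(y_1,\ldots,y_k)$ adjacent iff they differ in exactly one coordinate $i$ and $x_iy_i\in E(G_i)$. $\exp(A)$ is the least positive integer $m$ with $mx=0$ for all $x\in A$. For a graph $G$ with $n$ vertices and an Abelian group $A$ of order $n$ (written additively), and a bijection $f:V(G)\to A$, the weight of $x$ is $w_f(x)=\sum_{y\in N(x)} f(y)$ computed in $A$ ($N(x)$ the open neighbourhood). $f$ is an $A$-distance antimagic labelling if all weights are pairwise distinct, and an $A$-distance magic labelling if all weights are equal. $G$ is $A$-distance antimagic (resp. magic) if it admits such a labelling. *)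

From HB Require Import structures.
From mathcomp Require Import all_boot all_order all_fingroup all_solvable all_algebra.
Set Implicit Arguments. Unset Strict Implicit. Unset Printing Implicit Defensive.
Import GRing.Theory.
Local Open Scope ring_scope.

Definition simple_graph (V : finType) (e : rel V) : Prop :=
  symmetric e /\ irreflexive e.

Definition nbhd (V : finType) (e : rel V) (x : V) : {set V} := [set y | e x y].

Definition regular (V : finType) (e : rel V) (r : nat) : Prop :=
  forall x : V, #|nbhd e x| = r.

Definition weight (V : finType) (e : rel V) (A : zmodType) (f : V -> A) (x : V) : A :=
  \sum_(y in nbhd e x) f y.

Definition distance_antimagic_labelling (V : finType) (e : rel V) (A : finZmodType)
  (f : V -> A) : Prop := bijective f /\ injective (weight e f).

Definition distance_magic_labelling (V : finType) (e : rel V) (A : finZmodType)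
  (f : V -> A) : Prop := bijective f /\ (exists c : A, forall x, weight e f x = c).

(* G is A-distance antimagic / magic (|A| = |V(G)| is stated separately). *)
Definition distance_antimagic (V : finType) (e : rel V) (A : finZmodType) : Prop :=
  exists f : V -> A, distance_antimagic_labelling e f.
Definition distance_magic (V : finType) (e : rel V) (A : finZmodType) : Prop :=
  exists f : V -> A, distance_magic_labelling e f.

Definition expA (A : finZmodType) : nat := exponent [set: A].

Definition cart_prod (I : finType) (V : I -> finType) (e : forall i, rel (V i)) :
  rel {dffun forall i, V i} :=
  fun x y => [exists i, e i (x i) (y i) && [forall j, (j != i) ==> (x j == y j)]].

Section DProd.
Variables (I : finType) (A : I -> finZmodType).
Definition dprodZ := {dffun forall i, A i}.
HB.instance Definition _ := Finite.on dprodZ.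
Definition dz0 : dprodZ := [ffun i => 0].
Definition dadd (f g : dprodZ) : dprodZ := [ffun i => f i + g i].
Definition dopp (f : dprodZ) : dprodZ := [ffun i => - f i].
Lemma daddA : associative dadd.
Proof. by move=> f g h; apply/ffunP=> i; rewrite !ffunE addrA. Qed.
Lemma daddC : commutative dadd.
Proof. by move=> f g; apply/ffunP=> i; rewrite !ffunE addrC. Qed.
Lemma dadd0 : left_id dz0 dadd.
Proof. by move=> f; apply/ffunP=> i; rewrite !ffunE add0r. Qed.
Lemma daddN : left_inverse dz0 dopp dadd.
Proof. by move=> f; apply/ffunP=> i; rewrite !ffunE addNr. Qed.
HB.instance Definition _ := GRing.isZmodule.Build dprodZ daddA daddC dadd0 daddN.
End DProd.

From HB Require Import structures.
From mathcomp Require Import all_boot all_order all_fingroup all_solvable all_algebra.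
From Stdlib Require Import ClassicalEpsilon.
Set Implicit Arguments. Unset Strict Implicit. Unset Printing Implicit Defensive.
Import GRing.Theory.
Local Open Scope ring_scope.

(* Given labellings f_i : V(G_i) -> A_i, label the product graph by the
   product labelling  F(x) = (f_1(x_1), ..., f_k(x_k)), which is a bijection
   onto A_1 x ... x A_k whenever every f_i is one.  A neighbour y of x in the
   product differs from x in exactly one coordinate i, and y_i ranges over
   N(x_i); hence the j-th coordinate of the weight of x is
        w_{f_j}(x_j) + f_j(x_j) *+ (r - r_j),
   the second term collecting the r_i neighbours along each other factor
   i <> j, where x_j is unchanged.  When exp(A_j) divides r - r_j this term
   vanishes, so the weight of x is the tuple of the weights w_{f_j}(x_j):
   injectivity (resp. constancy) of all factor weights transfers to the
   product. *)

Lemma sum_dprodZE (I : finType) (A : I -> finZmodType) (T : finType) (P : pred T)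
    (G : T -> dprodZ A) (j : I) :
  (\sum_(y | P y) G y) j = \sum_(y | P y) G y j.
Proof.
by elim/big_rec2: _ => [|y a b _ <-]; rewrite /= ffunE.
Qed.

Lemma mulrn_expA (A : finZmodType) (m : nat) (a : A) :
  (expA A %| m)%N -> a *+ m = 0.
Proof.
move=> /dvdnP [q ->]; rewrite mulnC mulrnA /expA.
rewrite -[a *+ _]FinRing.zmodXgE expg_exponent ?in_setT //.
exact: mul0rn.
Qed.

Lemma family_choice (I : Type) (T : I -> Type) (P : forall i, T i -> Prop) :
  (forall i, exists t, P i t) -> exists f : forall i, T i, forall i, P i (f i).
Proof.
move=> H; exists (fun i => sval (constructive_indefinite_description _ (H i))).
by move=> i; exact: svalP.
Qed.

Section CartesianProduct.
Local Unset Implicit Arguments.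
Variables (I : finType) (V : I -> finType) (e : forall i, rel (V i)).
Hypothesis e_irr : forall i, irreflexive (e i).
Local Notation PV := {dffun forall i, V i}.
Local Notation ce := (cart_prod e).

Definition update (x : PV) (i : I) (z : V i) : PV := [ffun j => dfwith x z j].

Lemma update_inj (x : PV) (i : I) : injective (update x i).
Proof. by move=> z1 z2 /ffunP /(_ i); rewrite !ffunE !dfwith_in. Qed.

Lemma cart_nbhd_diff1 (x y : PV) :
  y \in nbhd ce x -> #|[pred i | x i != y i]| = 1%N.
Proof.
rewrite inE => /existsP [i /andP [exy /forallP same]].
rewrite -(card1 i); apply: eq_card => j; rewrite !inE.
case: (eqVneq j i) => [->|ne].
  by apply/negP => /eqP E; move: exy; rewrite -E e_irr.
by move: (same j); rewrite ne /= => ->.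
Qed.

Lemma cart_nbhd_sum_split (B : zmodType) (g : PV -> B) (x : PV) :
  \sum_(y in nbhd ce x) g y = \sum_i \sum_(y in nbhd ce x | x i != y i) g y.
Proof.
under [RHS]eq_bigr do rewrite big_mkcondr.
rewrite exchange_big /=; apply: eq_bigr => y yN.
by rewrite -big_mkcond /= sumr_const cart_nbhd_diff1.
Qed.

Lemma cart_nbhd_slice (x : PV) (i : I) :
  [set y in nbhd ce x | x i != y i] = [set update x i z | z in nbhd (e i) (x i)].
Proof.
apply/setP => y; rewrite !inE; apply/idP/idP.
  case/andP => /existsP [i0 /andP [exy /forallP same]] nxy.
  have i0_i : i0 = i.
    apply/eqP; apply: contraR nxy => ne; move: (same i).
    by rewrite eq_sym ne /= => /eqP ->.
  subst i0.
  apply/imsetP; exists (y i); first by rewrite inE.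
  apply/ffunP => j; rewrite ffunE; case: (eqVneq i j) => [<-|ne].
    by rewrite dfwith_in.
  by rewrite dfwith_out //; move: (same j); rewrite eq_sym ne /= => /eqP ->.
case/imsetP => z; rewrite inE => ez ->.
rewrite ffunE dfwith_in; apply/andP; split; last first.
  by apply/negP => /eqP E; move: ez; rewrite -E e_irr.
apply/existsP; exists i; rewrite ffunE dfwith_in ez /=.
apply/forallP => j; apply/implyP => ne; rewrite ffunE dfwith_out //.
by rewrite eq_sym.
Qed.

Lemma cart_nbhd_slice_sum (B : zmodType) (g : PV -> B) (x : PV) (i : I) :
  \sum_(y in nbhd ce x | x i != y i) g y = \sum_(z in nbhd (e i) (x i)) g (update x i z).
Proof.
rewrite (eq_bigl (mem [set y in nbhd ce x | x i != y i])); last first.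
  by move=> y; rewrite !inE.
by rewrite cart_nbhd_slice big_imset // => a b _ _; apply: update_inj.
Qed.

Variables (A : I -> finZmodType) (f : forall i, V i -> A i).

Definition prod_label (y : PV) : dprodZ A := [ffun i => f i (y i)].

Lemma prod_labelE (y : PV) (i : I) : prod_label y i = f i (y i).
Proof. exact: ffunE. Qed.

Variable r_ : I -> nat.
Hypothesis e_reg : forall i, regular (e i) (r_ i).

Lemma weight_prod_label_coord (x : PV) (j : I) :
  weight ce prod_label x j
  = weight (e j) (f j) (x j) + f j (x j) *+ (\sum_i r_ i - r_ j).
Proof.
rewrite /weight sum_dprodZE cart_nbhd_sum_split.
rewrite (eq_bigr _ (fun i _ => cart_nbhd_slice_sum (A j) (fun y => prod_label y j) x i)).
rewrite (bigD1 j) //=; congr (_ + _).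
  by apply: eq_bigr => z _; rewrite prod_labelE ffunE dfwith_in.
have -> : (\sum_i r_ i - r_ j = \sum_(i | i != j) r_ i)%N.
  by rewrite (bigD1 j) //= addKn.
rewrite -sumrMnr; apply: eq_bigr => i ne.
under eq_bigr => z _ do rewrite prod_labelE ffunE (dfwith_out _ _ ne).
by rewrite sumr_const e_reg.
Qed.

Hypothesis expA_dvd : forall i, (expA (A i) %| \sum_j r_ j - r_ i)%N.

Lemma weight_prod_label (x : PV) :
  weight ce prod_label x = [ffun j => weight (e j) (f j) (x j)].
Proof.
apply/ffunP => j.
by rewrite weight_prod_label_coord ffunE mulrn_expA ?addr0.
Qed.

Lemma prod_label_bij : (forall i, bijective (f i)) -> bijective prod_label.
Proof.
move=> f_bij.
have f_inv i : exists gi : A i -> V i, cancel (f i) gi /\ cancel gi (f i).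
  by case: (f_bij i) => gi c1 c2; exists gi.
have [g fgK] := family_choice f_inv.
exists (fun a : dprodZ A => [ffun i => g i (a i)] : PV).
  by move=> y; apply/ffunP => i; rewrite !ffunE (fgK i).1.
by move=> a; apply/ffunP => i; rewrite !ffunE (fgK i).2.
Qed.

Lemma prod_antimagic_labelling :
  (forall i, distance_antimagic_labelling (e i) (f i)) ->
  distance_antimagic_labelling ce prod_label.
Proof.
move=> Hf; split; first by apply: prod_label_bij => i; case: (Hf i).
move=> x y; rewrite !weight_prod_label => /ffunP E.
by apply/ffunP => j; move: (E j); rewrite !ffunE => /(Hf j).2.
Qed.

Lemma prod_magic_labelling :
  (forall i, distance_magic_labelling (e i) (f i)) ->
  distance_magic_labelling ce prod_label.
Proof.
move=> Hf; split; first by apply: prod_label_bij => i; case: (Hf i).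
have [c weightE] := family_choice (fun i => (Hf i).2).
exists [ffun j => c j] => x.
by rewrite weight_prod_label; apply/ffunP => j; rewrite !ffunE weightE.
Qed.

End CartesianProduct.

Arguments prod_label {I V A} f y.
Arguments prod_antimagic_labelling {I V e} e_irr {A f r_} e_reg expA_dvd.
Arguments prod_magic_labelling {I V e} e_irr {A f r_} e_reg expA_dvd.

Local Close Scope ring_scope.

Theorem mainTheorem6 (k : nat) (V : 'I_k -> finType) (e : forall i, rel (V i))
  (A : 'I_k -> finZmodType) (r_ : 'I_k -> nat) :
  (forall i, simple_graph (e i)) ->
  (forall i, regular (e i) (r_ i)) ->
  (forall i, 2 <= #|V i|) ->
  (forall i, #|A i| = #|V i|) ->
  (forall i, expA (A i) %| (\sum_(j < k) r_ j) - r_ i) ->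
  ((forall i, distance_antimagic (e i) (A i)) ->
     distance_antimagic (cart_prod e) (dprodZ A)) /\
  ((forall i, distance_magic (e i) (A i)) ->
     distance_magic (cart_prod e) (dprodZ A)).
Proof.
move=> simple reg _ _ dvd_exp.
have irr i : irreflexive (e i) by case: (simple i).
split=> /family_choice [f Hf]; exists (prod_label f).
- exact: (prod_antimagic_labelling irr reg dvd_exp).
- exact: (prod_magic_labelling irr reg dvd_exp).
Qed.
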